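(* Let $n$ be a positive integer, let $a_n$ be an integer, and let $x$ be a nonzero real or complex number. Then \[ \left(\frac{x-1}{x}\right)^n\sum_{a_{n-1}=1}^{a_n}\sum_{a_{n-2}=1}^{a_{n-1}}\cdots\sum_{a_0=1}^{a_1}x^{a_0} = x^{a_n}-\sum_{j=0}^{n-1}\left(\frac{x-1}{x}\right)^j\binom{a_n+j-1}{j}. \]
   Context: For integers $c,m$ and a function $f$ on the integers, $\sum_{k=c}^m f(k)$ denotes the usual sum if $m\ge c$, equals $0$ if $m=c-1$, and equals $-\sum_{k=m+1}^{c-1}f(k)$ if $m\le c-2$. The nested sum $\sum_{a_{n-1}=c}^{a_n}\sum_{a_{n-2}=c}^{a_{n-1}}\cdots\sum_{a_0=c}^{a_1}g(a_0)$ is the iterated sum ($n$ summation signs): innermost over $a_0$ from $c$ to $a_1$, then over $a_1$ from $c$ to $a_2$, ..., outermost over $a_{n-1}$ from $c$ to $a_n$. For an integer $j\ge0$ and any number $y$, $\binom{y}{j}=y(y-1)\cdots(y-j+1)/j!$. *)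

From mathcomp Require Import all_boot all_order all_algebra.
Set Implicit Arguments. Unset Strict Implicit. Unset Printing Implicit Defensive.
Import Order.TTheory GRing.Theory Num.Theory.
Local Open Scope ring_scope.

(* Signed sum over integers: sum_{k=c}^m f k with the paper's convention. *)
Definition gsum (R : zmodType) (c m : int) (f : int -> R) : R :=
  if (c <= m)%R then \sum_(0 <= i < absz (m - c + 1)%R) f (c + (i : nat)%:Z)%R
  else - \sum_(0 <= i < absz (c - 1 - m)%R) f (m + 1 + (i : nat)%:Z)%R.

(* nested n c g a = sum_{a_{n-1}=c}^{a} ... sum_{a_0=c}^{a_1} g a_0 (n signs). *)
Fixpoint nested (R : zmodType) (n : nat) (c : int) (g : int -> R) (a : int) : R :=
  match n with
  | O => g a
  | S k => gsum c a (nested k c g)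
  end.

Definition gbinom (R : fieldType) (y : R) (j : nat) : R :=
  (\prod_(i < j) (y - i%:R)) / (j`!)%:R.

From mathcomp Require Import all_boot all_order all_algebra zify ring.
Import Order.TTheory GRing.Theory Num.Theory.
Local Open Scope ring_scope.

(* Put y = (x - 1)/x and F_n(a) = x^a - T_n(a), where
   T_n(a) = sum_(j<n) y^j binom(a+j-1, j).  Since x^a - x^(a-1) = y x^a and,
   by Pascal's rule, T_(n+1)(a) - T_(n+1)(a-1) = y T_n(a), the function F_(n+1)
   is the antidifference of y F_n vanishing at 0.  The nested sum is an iterated
   antidifference from 1, so induction on n gives y^n (nested sum) = F_n. *)

Lemma gsum_telescope (R : zmodType) (c m : int) (f g : int -> R) :
  (forall k, g k = f k - f (k - 1)) -> gsum c m g = f m - f (c - 1).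
Proof.
move=> dfg; rewrite /gsum; case: ifP => le_cm.
  rewrite (telescope_sumr_eq (fun i : nat => f (c - 1 + i%:Z))) //.
    by congr (f _ - f _); lia.
  by move=> k _; rewrite dfg; congr (f _ - f _); lia.
rewrite (telescope_sumr_eq (fun i : nat => f (m + i%:Z))) //.
  by rewrite opprB; congr (f _ - f _); lia.
by move=> k _; rewrite dfg; congr (f _ - f _); lia.
Qed.

Lemma mulr_gsumr (R : pzRingType) (a : R) (c m : int) (h : int -> R) :
  a * gsum c m h = gsum c m (fun k => a * h k).
Proof. by rewrite /gsum; case: ifP => _; rewrite ?mulrN mulr_sumr. Qed.

Lemma gbinom0 (R : fieldType) (y : R) : gbinom y 0 = 1.
Proof. by rewrite /gbinom big_ord0 divr1. Qed.

Lemma gbinom_small (R : fieldType) (m j : nat) : (m < j)%N -> gbinom (m%:R : R) j = 0.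
Proof.
move=> lt_mj; rewrite /gbinom (bigD1 (Ordinal lt_mj)) //=.
by rewrite subrr !mul0r.
Qed.

Lemma gbinomS (R : numFieldType) (y : R) (j : nat) :
  gbinom y j.+1 = gbinom (y - 1) j.+1 + gbinom (y - 1) j.
Proof.
rewrite /gbinom big_ord_recl big_ord_recr /= subr0.
have -> : \prod_(i < j) (y - (bump 0 i)%:R) = \prod_(i < j) (y - 1 - i%:R).
  by apply: eq_bigr => i _; rewrite /bump /= add1n -addn1 natrD; ring.
have j1_neq0 : (j.+1%:R : R) != 0 by rewrite pnatr_eq0.
have fact_neq0 : (j`!%:R : R) != 0 by rewrite pnatr_eq0 -lt0n fact_gt0.
rewrite factS natrM -addn1 natrD; field.
by rewrite fact_neq0 natr1.
Qed.

Definition tail_sum {R : fieldType} (y : R) (n : nat) (m : int) : R :=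
  \sum_(0 <= j < n) y ^+ j * gbinom ((m + j%:Z - 1)%:~R : R) j.

Lemma tail_sumS_sub (R : numFieldType) (y : R) (n : nat) (k : int) :
  tail_sum y n.+1 k - tail_sum y n.+1 (k - 1) = y * tail_sum y n k.
Proof.
rewrite /tail_sum !big_nat_recl // !expr0 !gbinom0 !mul1r.
rewrite opprD addrACA subrr add0r -sumrB mulr_sumr.
apply: eq_bigr => j _; rewrite exprS -!mulrA -!mulrBr; congr (_ * (_ * _)).
have -> : ((k + j.+1%:Z - 1)%:~R : R) = (k + j%:Z)%:~R by congr (_%:~R); lia.
have -> : ((k - 1 + j.+1%:Z - 1)%:~R : R) = (k + j%:Z)%:~R - 1.
  by rewrite -[1]/(1%:~R) -intrB; congr (_%:~R); lia.
have -> : ((k + j%:Z - 1)%:~R : R) = (k + j%:Z)%:~R - 1 by rewrite -[1]/(1%:~R) -intrB.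
by rewrite gbinomS addrAC subrr add0r.
Qed.

Lemma tail_sumS0 (R : numFieldType) (y : R) (n : nat) : tail_sum y n.+1 0 = 1.
Proof.
rewrite /tail_sum big_nat_recl // expr0 gbinom0 mul1r big1 ?addr0 // => j _.
have -> : ((0 + j.+1%:Z - 1)%:~R : R) = (j%:Z)%:~R by congr (_%:~R); lia.
by rewrite -pmulrn gbinom_small ?mulr0.
Qed.

Lemma expfz_sub_pred (R : fieldType) (x : R) (k : int) :
  x != 0 -> x ^ k - x ^ (k - 1) = (x - 1) / x * x ^ k.
Proof. by move=> x_neq0; rewrite expfzDr // exprN1; field. Qed.

Theorem lemma2 (R : numFieldType) (n : nat) (an : int) (x : R) :
  (0 < n)%N -> x != 0 ->
  ((x - 1) / x) ^+ n * nested n 1 (fun a0 : int => x ^ a0) an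
  = x ^ an - \sum_(0 <= j < n) ((x - 1) / x) ^+ j * gbinom ((an + j%:Z - 1)%:~R : R) j.
Proof.
move=> _ x_neq0; rewrite -/(tail_sum _ n an).
elim: n an => [|n IHn] m; first by rewrite expr0 mul1r /tail_sum big_geq ?subr0.
rewrite exprS -mulrA /= !mulr_gsumr.
rewrite (@gsum_telescope _ _ _ (fun k => x ^ k - tail_sum ((x - 1) / x) n.+1 k)).
  by rewrite subrr expr0z tail_sumS0 subrr subr0.
move=> k; rewrite IHn mulrBr -tail_sumS_sub -expfz_sub_pred //; ring.
Qed.
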